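(* For every $\tau\in\mathbb C$ and every VK parameters $\alpha,\beta,\gamma$, as formal power series in $t$, $$1+\sum_{k\ge1}\epsilon_{\alpha,\beta,\gamma}(\pi_\tau g_k)\,t^k=e^{\gamma\theta\tau t}\prod_{i=1}^\infty\frac{1+\theta\beta_i(\tau-\theta\beta_i)t}{(1-\alpha_i(\tau+\alpha_i)t)^{\theta}}.$$
   Context: Fix $\theta>0$. $\Lambda$ is the algebra of symmetric functions in $x_1,x_2,\dots$; $g_k\in\Lambda$ are defined by $1+\sum_{k\ge1}g_kt^k=\prod_j(1-x_jt)^{-\theta}$. VK parameters: $\alpha_1\ge\alpha_2\ge\dots\ge0$, $\beta_1\ge\beta_2\ge\dots\ge0$, $\gamma\ge0$, $\sum(\alpha_i+\beta_i)<\infty$. $\epsilon_{\alpha,\beta,\gamma}:\Lambda\to\mathbb C$ is the algebra homomorphism with $1+\sum_k\epsilon_{\alpha,\beta,\gamma}(g_k)t^k=e^{\gamma\theta t}\prod_i\frac{1+\beta_i\theta t}{(1-\alpha_it)^\theta}$. For $\tau\in\mathbb C$, $\pi_\tau:\Lambda\to\Lambda$ is the homomorphism $(\pi_\tau f)(x_1,x_2,\dots)=f(x_1(x_1+\tau),x_2(x_2+\tau),\dots)$. *)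

From HB Require Import structures.
From mathcomp Require Import all_boot all_order all_algebra.
From mathcomp Require Import all_classical all_reals all_analysis.
From mathcomp Require Import complex Rstruct Rstruct_topology.
From Stdlib Require Rdefinitions.
From mathcomp Require mpoly.
Set Implicit Arguments.
Unset Strict Implicit.
Unset Printing Implicit Defensive.
Import Order.TTheory GRing.Theory Num.Theory.
Import numFieldNormedType.Exports.
Local Open Scope classical_set_scope.
Local Open Scope ring_scope.
Local Open Scope complex_scope.

Notation R := Rdefinitions.R.

Definition C : numClosedFieldType := R[i].

Definition fps := nat -> C.

Definition sone : fps := fun k => (k == 0%N)%:R.
Definition smul (f g : fps) : fps :=
  fun k => \sum_(i < k.+1) f i * g (k - i)%N.
Definition sprod (s : seq fps) : fps := foldr smul sone s.

Definition rising (th : C) (k : nat) : C := \prod_(i < k) (th + i%:R).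
(* (1 - a t)^(-th) = sum_k  th^(k rising)/k!  a^k t^k  (binomial series) *)
Definition binser (th a : C) : fps :=
  fun k => rising th k / (k`!)%:R * a ^+ k.
Definition linser (c : C) : fps :=
  fun k => if k == 0%N then 1 else if k == 1%N then c else 0.
Definition expser (c : C) : fps := fun k => c ^+ k / (k`!)%:R.
Definition genser (c : nat -> C) : fps :=
  fun k => if k is 0%N then 1 else c k.

Definition is_infprod (F : nat -> fps) (P : fps) : Prop :=
  forall k : nat,
    (fun N : nat => sprod [seq F i | i <- iota 0 N] k) @ \oo --> P k.

(* A symmetric function f(x_1, x_2, ...) is represented by the function
   sending a finite list s = [x_1; ...; x_n] to f(x_1, ..., x_n, 0, 0, ...).
   The ring operations of Lambda are then the pointwise ones. *)
Definition symfun := seq C -> C.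

Definition in_Lambda (F : symfun) : Prop :=
  [/\ (forall s s' : seq C, perm_eq s s' -> F s = F s'),
      (forall s : seq C, F (rcons s 0) = F s)
    & exists d : nat, forall n : nat, exists p : mpoly.mpoly n C,
        (forall m : mpoly.multinom n, mpoly.mcoeff m p != 0 -> (mpoly.mdeg m <= d)%N) /\
        forall x : n.-tuple C, F x = mpoly.meval (fun i => tnth x i) p].

(* g_k : 1 + sum_{k>=1} g_k t^k = prod_j (1 - x_j t)^(-theta) *)
Definition g_k (theta : R) (k : nat) : symfun :=
  fun s => sprod [seq binser theta%:C x | x <- s] k.

Definition pi_tau (tau : C) (F : symfun) : symfun :=
  fun s => F [seq x * (x + tau) | x <- s].

Definition is_alg_hom (eps : symfun -> C) : Prop :=
  [/\ forall c : C, eps (fun _ => c) = c,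
      forall F G, in_Lambda F -> in_Lambda G ->
        eps (fun s => F s + G s) = eps F + eps G
    & forall F G, in_Lambda F -> in_Lambda G ->
        eps (fun s => F s * G s) = eps F * eps G].

Definition is_VK (alpha beta : nat -> R) (gamma : R) : Prop :=
  [/\ forall i, alpha i.+1 <= alpha i,
      forall i, beta i.+1 <= beta i,
      forall i, 0 <= alpha i /\ 0 <= beta i,
      0 <= gamma
    & cvg (series (fun i => alpha i + beta i) @ \oo)].

(* eps = eps_{alpha,beta,gamma}:
   1 + sum_k eps(g_k) t^k = e^{gamma theta t} prod_i (1 + beta_i theta t) (1 - alpha_i t)^(-theta) *)
Definition is_VK_hom (theta : R) (alpha beta : nat -> R) (gamma : R)
    (eps : symfun -> C) : Prop :=
  is_alg_hom eps /\
  exists P : fps,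
    is_infprod (fun i => smul (linser ((beta i)%:C * theta%:C))
                              (binser theta%:C (alpha i)%:C)) P /\
    genser (fun k => eps (g_k theta k)) = smul (expser (gamma%:C * theta%:C)) P.

From HB Require Import structures.
From mathcomp Require Import all_boot all_order all_algebra.
From mathcomp Require Import complex Rstruct Rstruct_topology.
From mathcomp Require Import ring zify.
Set Implicit Arguments.
Unset Strict Implicit.
Unset Printing Implicit Defensive.
Import Order.TTheory GRing.Theory Num.Theory.
Local Open Scope ring_scope.

(* Let a(u), b(u) be the power series roots of z^2 - tau u^2 z - u^2, so that
   a + b = tau u^2 and a b = -u^2.  For a single variable x,
     (1 - x a)^-theta (1 - x b)^-theta = (1 - x (a + b) + x^2 a b)^-theta
                                       = (1 - x (x + tau) u^2)^-theta
   by the addition law (1 - y)^-theta (1 - z)^-theta = (1 - (y + z - y z))^-theta,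
   which follows from uniqueness for the ODE (1 - t) F' = theta F.  Hence the map
   pi_ser : f(t) |-> g(t), g(u^2) = f(a) f(b), sends the generating series of
   the g_k to that of the pi_tau g_k.  As b(u) = a(-u), f(a) f(b) is even and
   pi_ser is a ring endomorphism of power series; it is continuous
   coefficientwise and given by finite bilinear forms in the coefficients, so it
   commutes with eps and with infinite products.  It sends e^(c t) to
   e^(c tau t) and 1 + c t to 1 + c (tau - c) t; applying it to the identity
   defining eps_{alpha,beta,gamma} gives the result.  Power series are handled
   through their truncations, as polynomials modulo X^n. *)

Section CongruenceModXn.
Variable K : comNzRingType.
Implicit Types (p q r y z : {poly K}) (m n : nat).

Definition dvdXn n p := exists r, p = r * 'X^n.
Definition eqXn n p q := dvdXn n (p - q).

Lemma dvdXnP n p : dvdXn n p <-> (forall k, (k < n)%N -> p`_k = 0).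
Proof.
split=> [[r ->] k kn|p_lt_n]; first by rewrite coefMXn kn.
exists (drop_poly n p); rewrite -[LHS](poly_take_drop n).
suff -> : take_poly n p = 0 by rewrite add0r.
by apply/polyP => k; rewrite coef_take_poly coef0; case: ifP => // /p_lt_n.
Qed.

Lemma dvdXnS n p : dvdXn n.+1 p <-> dvdXn n p /\ p`_n = 0.
Proof.
rewrite !dvdXnP; split=> [p0|[p0 pn] k]; first by split=> [k kn|]; apply: p0; lia.
by rewrite ltnS leq_eqVlt => /predU1P[->|]; last exact: p0.
Qed.

Lemma dvdXn0 n : dvdXn n 0.
Proof. by exists 0; rewrite mul0r. Qed.

Lemma dvdXn_Xn n : dvdXn n 'X^n.
Proof. by exists 1; rewrite mul1r. Qed.

Lemma dvdXn1X : dvdXn 1 'X.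
Proof. exact: dvdXn_Xn 1. Qed.

Lemma dvdXnD n p q : dvdXn n p -> dvdXn n q -> dvdXn n (p + q).
Proof. by move=> [r ->] [s ->]; exists (r + s); rewrite mulrDl. Qed.

Lemma dvdXnN n p : dvdXn n p -> dvdXn n (- p).
Proof. by move=> [r ->]; exists (- r); rewrite mulNr. Qed.

Lemma dvdXnB n p q : dvdXn n p -> dvdXn n q -> dvdXn n (p - q).
Proof. by move=> dp dq; apply/dvdXnD/dvdXnN. Qed.

Lemma dvdXnMl n p q : dvdXn n p -> dvdXn n (q * p).
Proof. by move=> [r ->]; exists (q * r); rewrite mulrA. Qed.

Lemma dvdXnMr n p q : dvdXn n p -> dvdXn n (p * q).
Proof. by rewrite mulrC; apply: dvdXnMl. Qed.

Lemma dvdXnZ n c p : dvdXn n p -> dvdXn n (c *: p).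
Proof. by rewrite -mul_polyC; apply: dvdXnMl. Qed.

Lemma dvdXnM m n p q : dvdXn m p -> dvdXn n q -> dvdXn (m + n) (p * q).
Proof. by move=> [r ->] [s ->]; exists (r * s); rewrite exprD; ring. Qed.

Lemma dvdXnX n p : dvdXn 1 p -> dvdXn n (p ^+ n).
Proof. by move=> [r ->]; exists (r ^+ n); rewrite exprMn -exprM mul1n. Qed.

Lemma dvdXnW m n p : (m <= n)%N -> dvdXn n p -> dvdXn m p.
Proof. by move=> mn /dvdXnP p0; apply/dvdXnP => k km; apply: p0; lia. Qed.

Lemma dvdXn_sum n (I : Type) (s : seq I) (F : I -> {poly K}) :
  (forall i, dvdXn n (F i)) -> dvdXn n (\sum_(i <- s) F i).
Proof.
by move=> dF; elim/big_rec: _ => [|i x _]; [apply: dvdXn0 | apply: dvdXnD].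
Qed.

Lemma eqXnP n p q : eqXn n p q <-> (forall k, (k < n)%N -> p`_k = q`_k).
Proof.
rewrite /eqXn dvdXnP; split=> pq k /pq; rewrite coefB.
  by move/eqP; rewrite subr_eq0 => /eqP.
by move->; rewrite subrr.
Qed.

Lemma eqXn_coef n p q k : eqXn n p q -> (k < n)%N -> p`_k = q`_k.
Proof. by move/eqXnP; apply. Qed.

Lemma eqXn_refl n p : eqXn n p p.
Proof. by rewrite /eqXn subrr; apply: dvdXn0. Qed.

Lemma eqXn_trans n p q r : eqXn n p q -> eqXn n q r -> eqXn n p r.
Proof. by move=> pq qr; have := dvdXnD pq qr; rewrite /eqXn addrA subrK. Qed.

Lemma eqXnW m n p q : (m <= n)%N -> eqXn n p q -> eqXn m p q.
Proof. exact: dvdXnW. Qed.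

Lemma eqXnD n p q p' q' : eqXn n p p' -> eqXn n q q' -> eqXn n (p + q) (p' + q').
Proof. by move=> pp qq; have := dvdXnD pp qq; rewrite /eqXn opprD addrACA. Qed.

Lemma eqXnZ n c p q : eqXn n p q -> eqXn n (c *: p) (c *: q).
Proof. by rewrite /eqXn -scalerBr; apply: dvdXnZ. Qed.

Lemma eqXnM n p q p' q' : eqXn n p p' -> eqXn n q q' -> eqXn n (p * q) (p' * q').
Proof.
move=> pp qq; have := dvdXnD (dvdXnMr q pp) (dvdXnMl p' qq); rewrite /eqXn.
by congr dvdXn; ring.
Qed.

Lemma dvdXn_comp n p y : dvdXn 1 y -> dvdXn n p -> dvdXn n (p \Po y).
Proof.
by move=> y0 [r ->]; rewrite comp_polyM comp_Xn_poly; apply/dvdXnMl/dvdXnX.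
Qed.

Lemma eqXn_compl n p q y : dvdXn 1 y -> eqXn n p q -> eqXn n (p \Po y) (q \Po y).
Proof. by move=> y0 pq; rewrite /eqXn -comp_polyB; apply: dvdXn_comp. Qed.

Lemma eqXn_compr n p y z : eqXn n y z -> eqXn n (p \Po y) (p \Po z).
Proof.
move=> yz; rewrite /eqXn !comp_polyE -sumrB; apply: dvdXn_sum => i.
by rewrite -scalerBr subrXX; apply/dvdXnZ/dvdXnMr.
Qed.

Lemma eqXn_comp n p q y z : dvdXn 1 y -> eqXn n p q -> eqXn n y z ->
  eqXn n (p \Po y) (q \Po z).
Proof. by move=> y0 pq yz; apply: eqXn_trans (eqXn_compl y0 pq) (eqXn_compr _ yz). Qed.

Lemma comp_poly1 p : 1 \Po p = 1.
Proof. by rewrite -polyC1 comp_polyC. Qed.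

Lemma coef0_comp p y : dvdXn 1 y -> (p \Po y)`_0 = p`_0.
Proof.
move=> y0; have /eqXn_compr/eqXn_coef-> // : eqXn 1 y 0 by rewrite /eqXn subr0.
by rewrite comp_poly0r coefC.
Qed.

Lemma coef_comp_polyZX c p k : (p \Po (c *: 'X))`_k = c ^+ k * p`_k.
Proof.
rewrite comp_polyE coef_sum.
under eq_bigr => i _ do rewrite exprZn scalerA coefZ coefXn.
have [kp|pk] := ltnP k (size p); last first.
  by rewrite nth_default // mulr0 big1 // => i _; rewrite (gtn_eqF (leq_trans _ pk)) ?mulr0.
rewrite (bigD1 (Ordinal kp)) //= eqxx mulr1 big1 ?addr0 1?mulrC // => i.
by rewrite -val_eqE eq_sym /= => /negbTE->; rewrite mulr0.
Qed.
End CongruenceModXn.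
Arguments dvdXn_Xn {K}.
Arguments dvdXn1X {K}.

Section CancelModXn.
Variable K : idomainType.
Implicit Types (p q : {poly K}) (n : nat).

Lemma dvdXn_cancel n p q : q`_0 != 0 -> dvdXn n (p * q) -> dvdXn n p.
Proof.
move=> q0; elim: n => [_|n IHn pq]; first by exists p; rewrite mulr1.
have [r defp] := IHn (dvdXnW (leqnSn n) pq).
apply/dvdXnS; split; first by exists r.
move/dvdXnP/(_ n (ltnSn n)): pq; rewrite defp mulrAC !coefMXn ltnn subnn coef0M.
by move/eqP; rewrite mulf_eq0 (negbTE q0) orbF => /eqP.
Qed.
End CancelModXn.

Section LinearODE.
Variable K : numDomainType.
Implicit Types (a b p q H : {poly K}) (n : nat).

Lemma ode_zero_solution n a b H : a`_0 = 1 -> H`_0 = 0 ->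
  eqXn n (a * H^`()) (b * H) -> dvdXn n.+1 H.
Proof.
move=> a0 H0; elim: n => [_|n IHn ode]; first by apply/dvdXnP => -[].
have /IHn[r defH] := eqXnW (leqnSn n) ode.
apply/dvdXnS; split; first by exists r.
rewrite defH coefMXn ltnn subnn.
have /eqXn_coef/(_ (ltnSn n)) := ode; rewrite defH mulrA coefMXn ltnSn.
rewrite derivM derivXn /= exprS mulrA mulrnAr -mulrnAl -mulrDl mulrA coefMXn ltnn subnn.
rewrite coef0M coefD coefMX coefMn a0 mul1r add0r.
by move/eqP; rewrite mulrn_eq0 => /eqP.
Qed.

(* Both sides solve (q o w) H' = c w' H with H(0) = 1. *)
Lemma ode_comp_mul n (q F y z w : {poly K}) (c : K) :
  q`_0 = 1 -> F`_0 = 1 -> eqXn n (q * F^`()) (c *: F) ->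
  dvdXn 1 y -> dvdXn 1 z -> dvdXn 1 w ->
  q \Po w = (q \Po y) * (q \Po z) ->
  w^`() = y^`() * (q \Po z) + z^`() * (q \Po y) ->
  eqXn n.+1 ((F \Po y) * (F \Po z)) (F \Po w).
Proof.
move=> q0 F0 odeF y0 z0 w0 qw dw.
have odeF_comp v : dvdXn 1 v -> dvdXn n ((q \Po v) * (F^`() \Po v) - c *: (F \Po v)).
  by move=> v0; have := eqXn_compl v0 odeF; rewrite comp_polyM comp_polyZ.
apply: (@ode_zero_solution _ (q \Po w) (c *: w^`())).
- by rewrite coef0_comp.
- by rewrite coefB coef0M !coef0_comp // F0 mulr1 subrr.
rewrite /eqXn.
have -> : (q \Po w) * ((F \Po y) * (F \Po z) - (F \Po w))^`() -
    c *: w^`() * ((F \Po y) * (F \Po z) - (F \Po w)) =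
  ((q \Po y) * (F^`() \Po y) - c *: (F \Po y)) * (y^`() * (q \Po z) * (F \Po z)) +
  ((q \Po z) * (F^`() \Po z) - c *: (F \Po z)) * (z^`() * (q \Po y) * (F \Po y)) -
  ((q \Po w) * (F^`() \Po w) - c *: (F \Po w)) * w^`().
  rewrite derivB derivM !deriv_comp qw dw -!mul_polyC; ring.
by apply: dvdXnB; [apply: dvdXnD|]; apply/dvdXnMr/odeF_comp.
Qed.
End LinearODE.

Implicit Types (c x th : C) (p q y z : {poly C}) (f g : fps).

Definition trunc (N : nat) (f : fps) : {poly C} := \poly_(i < N) f i.

Lemma coef_trunc N f k : (trunc N f)`_k = if (k < N)%N then f k else 0.
Proof. exact: coef_poly. Qed.

Lemma eqXn_trunc M N f : (N <= M)%N -> eqXn N (trunc M f) (trunc N f).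
Proof. by move=> NM; apply/eqXnP => k kN; rewrite !coef_trunc kN (leq_trans kN NM). Qed.

Lemma trunc_smul N f g : eqXn N (trunc N (smul f g)) (trunc N f * trunc N g).
Proof.
apply/eqXnP => k kN; rewrite coef_trunc kN coefM; apply: eq_bigr => i _.
by rewrite !coef_trunc (leq_ltn_trans _ kN) ?(leq_ltn_trans (leq_subr _ _) kN) // -ltnS.
Qed.

Lemma trunc_sone N : (0 < N)%N -> trunc N sone = 1.
Proof.
by move=> N0; apply/polyP => -[|k]; rewrite coef_trunc coef1 /= ?N0 //; case: ifP.
Qed.

Lemma trunc_sprod N s : eqXn N (trunc N (sprod s)) (\prod_(f <- s) trunc N f).
Proof.
elim: s => [|f s IHs].
  by apply/eqXnP => k kN; rewrite big_nil coef_trunc kN coef1.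
rewrite big_cons; apply: eqXn_trans (trunc_smul _ _ _) _.
exact: eqXnM (eqXn_refl _ _) IHs.
Qed.

Lemma coef_sprod N s k : (k < N)%N -> sprod s k = (\prod_(f <- s) trunc N f)`_k.
Proof. by move=> kN; rewrite -(eqXn_coef (trunc_sprod N s) kN) coef_trunc kN. Qed.

Lemma trunc_comp N f q : trunc N f \Po q = \sum_(i < N) f i *: q ^+ i.
Proof.
rewrite /trunc poly_def raddf_sum; apply: eq_bigr => i _.
by rewrite /= comp_polyZ comp_Xn_poly.
Qed.

Lemma coef_comp_polyZX2 c p k : (p \Po (c *: 'X^2))`_(k.*2) = c ^+ k * p`_k.
Proof.
have -> : c *: 'X^2 = (c *: 'X) \Po ('X^2 : {poly C}) by rewrite comp_polyZ comp_polyX.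
by rewrite comp_polyA coef_comp_poly_Xn // -mul2n dvdn_mulr // mulKn // coef_comp_polyZX.
Qed.

Lemma binser0 th x : binser th x 0 = 1.
Proof. by rewrite /binser /rising big_ord0 fact0 expr0 divr1 mulr1. Qed.

Lemma trunc_binser th x N : trunc N (binser th x) = trunc N (binser th 1) \Po (x *: 'X).
Proof.
apply/polyP => i; rewrite coef_comp_polyZX !coef_trunc.
by case: ifP; rewrite ?mulr0 // /binser expr1n mulr1 mulrC.
Qed.

Lemma fact_neq0 k : k`!%:R != 0 :> C.
Proof. by rewrite pnatr_eq0 -lt0n fact_gt0. Qed.

Lemma binserS th x k : binser th x k.+1 *+ k.+1 = binser th x k * (th + k%:R) * x.
Proof.
rewrite /binser /rising big_ord_recr /= factS natrM exprS -[_ *+ k.+1]mulr_natr.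
by field; rewrite fact_neq0 nat1r pnatr_eq0.
Qed.

Lemma expserS c k : expser c k.+1 *+ k.+1 = c * expser c k.
Proof.
rewrite /expser factS natrM exprS -[_ *+ k.+1]mulr_natr.
by field; rewrite fact_neq0 nat1r pnatr_eq0.
Qed.

Lemma binser_ode th N :
  eqXn N ((1 - 'X) * (trunc N.+1 (binser th 1))^`()) (th *: trunc N.+1 (binser th 1)).
Proof.
apply/eqXnP => j jN; rewrite mulrBl mul1r coefB coefXM coefZ !coef_deriv !coef_trunc.
rewrite !ltnS jN (ltnW jN) binserS.
case: j jN => [|j] jN /=; first by rewrite !mulr1 addr0 subr0 mulrC.
rewrite (ltnW jN) -[_ *+ j.+1]mulr_natr; ring.
Qed.

Lemma expser_ode c N : eqXn N (trunc N.+1 (expser c))^`() (c *: trunc N.+1 (expser c)).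
Proof.
by apply/eqXnP => j jN; rewrite coefZ coef_deriv !coef_trunc ltnS jN ltnW // expserS.
Qed.

Lemma binser_comp_mul th N y z : dvdXn 1 y -> dvdXn 1 z ->
  eqXn N.+1 ((trunc N.+1 (binser th 1) \Po y) * (trunc N.+1 (binser th 1) \Po z))
            (trunc N.+1 (binser th 1) \Po (y + z - y * z)).
Proof.
move=> y0 z0; have w0 := dvdXnB (dvdXnD y0 z0) (dvdXnMr z y0).
apply: (ode_comp_mul _ _ (binser_ode th N) y0 z0 w0).
- by rewrite coefB coef1 coefX /= subr0.
- by rewrite coef_trunc binser0.
- by rewrite !comp_polyB !comp_poly1 !comp_polyX; ring.
- by rewrite !comp_polyB !comp_poly1 !comp_polyX derivB derivD derivM; ring.
Qed.

Lemma expser_comp_mul c N y z : dvdXn 1 y -> dvdXn 1 z ->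
  eqXn N.+1 ((trunc N.+1 (expser c) \Po y) * (trunc N.+1 (expser c) \Po z))
            (trunc N.+1 (expser c) \Po (y + z)).
Proof.
move=> y0 z0; have odeE := expser_ode c N; rewrite -[_^`()]mul1r in odeE.
apply: (ode_comp_mul _ _ odeE y0 z0 (dvdXnD y0 z0)); rewrite ?comp_poly1.
- by rewrite coef1.
- by rewrite coef_trunc /expser expr0 divr1.
- by rewrite mulr1.
- by rewrite derivD !mulr1.
Qed.

Section QuadraticRoots.
Variable tau : C.

(* rootp = X w and rootm = X (tau X - w) are the roots of z^2 - tau X^2 z - X^2,
   where w is the branch of w^2 - tau X w = 1 with w(0) = 1, here modulo X^(N+1). *)
Definition wquad w := w ^+ 2 - tau *: ('X * w) - 1.

(* Subtracting c X^(N+1) from w lowers the coefficient of X^(N+1) in wquad w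
   by 2 c, because w(0) = 1. *)
Fixpoint wroot (N : nat) : {poly C} :=
  if N is M.+1 then wroot M - ((wquad (wroot M))`_N / 2) *: 'X^N else 1.

Lemma wroot0 N : (wroot N)`_0 = 1.
Proof. by elim: N => [|N IHN] /=; rewrite ?coef1 // coefB coefZ coefXn mulr0 subr0. Qed.

Lemma wroot_quad N : dvdXn N.+1 (wquad (wroot N)).
Proof.
elim: N => [|N IHN].
  apply/dvdXnP => -[|//] _.
  by rewrite /wquad expr1n !coefB coefZ coefXM /= coef1 mulr0 subr0 subrr.
rewrite /= -/(wroot N); set w := wroot N; set c := (wquad w)`_N.+1 / 2.
have -> : wquad (w - c *: 'X^(N.+1)) = wquad w - (2 * c) *: ('X^(N.+1) * w) +
    (c ^+ 2 *: 'X^N + (c * tau)%:P) * 'X^(N.+2).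
  by rewrite /wquad -!mul_polyC !polyCM !exprS; ring.
apply: dvdXnD; last by eexists.
apply/dvdXnS; split; first exact/dvdXnB/dvdXnZ/dvdXnMr/dvdXn_Xn.
rewrite coefB coefZ coefXnM ltnn subnn wroot0 mulr1 /c mulrC divfK ?subrr //.
by rewrite pnatr_eq0.
Qed.

Lemma eqXn_wroot M N : (N <= M)%N -> eqXn N.+1 (wroot M) (wroot N).
Proof.
elim: M => [|M IHM]; first by rewrite leqn0 => /eqP->; apply: eqXn_refl.
rewrite leq_eqVlt => /predU1P[->|]; first exact: eqXn_refl.
rewrite ltnS => NM; apply: eqXn_trans (IHM NM); apply/eqXnP => k kN.
by rewrite /= coefB coefZ coefXn ltn_eqF ?mulr0 ?subr0 //; lia.
Qed.

Lemma wroot_opp N : eqXn N.+1 (wroot N \Po - 'X) (wroot N - tau *: 'X).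
Proof.
set w := wroot N; set v1 := w \Po - 'X; set v2 := w - tau *: 'X.
have quad_v1 : v1 ^+ 2 + tau *: ('X * v1) - 1 = wquad w \Po - 'X.
  rewrite /wquad /v1 !comp_polyB comp_poly1 comp_polyZ !comp_polyM comp_polyX.
  by rewrite -!mul_polyC; ring.
have quad_v2 : v2 ^+ 2 + tau *: ('X * v2) - 1 = wquad w.
  by rewrite /wquad /v2 -!mul_polyC; ring.
have oppX0 : dvdXn 1 (- 'X : {poly C}) := dvdXnN dvdXn1X.
apply: (@dvdXn_cancel _ _ _ (v1 + v2 + tau *: 'X)).
  by rewrite /v2 -addrA subrK coefD coef0_comp // wroot0 -mulr2n mulrn_eq0 oner_eq0.
have -> : (v1 - v2) * (v1 + v2 + tau *: 'X) = (wquad w \Po - 'X) - wquad w.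
  by rewrite -quad_v1 -quad_v2 -!mul_polyC; ring.
apply: dvdXnB; last exact: wroot_quad.
exact: dvdXn_comp oppX0 (wroot_quad N).
Qed.

Definition rootp N := 'X * wroot N.
Definition rootm N := 'X * (tau *: 'X - wroot N).

Lemma rootp0 N : dvdXn 1 (rootp N).
Proof. exact/dvdXnMr/dvdXn1X. Qed.

Lemma rootm0 N : dvdXn 1 (rootm N).
Proof. exact/dvdXnMr/dvdXn1X. Qed.

Lemma rootp_add_rootm N : rootp N + rootm N = tau *: 'X^2.
Proof. by rewrite /rootp /rootm -!mul_polyC; ring. Qed.

Lemma rootp_mul_rootm N : eqXn N.+3 (rootp N * rootm N) (- 'X^2).
Proof.
rewrite /eqXn; have -> : rootp N * rootm N - - 'X^2 = 'X^2 * - wquad (wroot N).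
  by rewrite /rootp /rootm /wquad -!mul_polyC; ring.
by rewrite -[N.+3]/(2 + N.+1)%N; apply/(dvdXnM (dvdXn_Xn 2))/dvdXnN/wroot_quad.
Qed.

Lemma eqXn_rootp M N : (N <= M)%N -> eqXn N.+2 (rootp M) (rootp N).
Proof.
move=> NM; rewrite /eqXn /rootp -mulrBr -[N.+2]/(1 + N.+1)%N.
exact/(dvdXnM dvdXn1X)/eqXn_wroot.
Qed.

Lemma eqXn_rootm M N : (N <= M)%N -> eqXn N.+2 (rootm M) (rootm N).
Proof.
move=> NM; rewrite /eqXn /rootm -mulrBr.
have -> : tau *: 'X - wroot M - (tau *: 'X - wroot N) = - (wroot M - wroot N) by ring.
by rewrite -[N.+2]/(1 + N.+1)%N; apply/(dvdXnM dvdXn1X)/dvdXnN/eqXn_wroot.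
Qed.

Lemma rootp_opp N : eqXn N.+2 (rootp N \Po - 'X) (rootm N).
Proof.
rewrite /eqXn /rootp /rootm comp_polyM comp_polyX.
have -> : - 'X * (wroot N \Po - 'X) - 'X * (tau *: 'X - wroot N) =
    - 'X * ((wroot N \Po - 'X) - (wroot N - tau *: 'X)) by rewrite -!mul_polyC; ring.
by rewrite -[N.+2]/(1 + N.+1)%N; apply/(dvdXnM (dvdXnN dvdXn1X))/wroot_opp.
Qed.

Lemma rootm_opp N : eqXn N.+2 (rootm N \Po - 'X) (rootp N).
Proof.
rewrite /eqXn /rootp /rootm comp_polyM comp_polyB comp_polyZ !comp_polyX.
have -> : - 'X * (tau *: - 'X - (wroot N \Po - 'X)) - 'X * wroot N =
    'X * ((wroot N \Po - 'X) - (wroot N - tau *: 'X)) by rewrite -!mul_polyC; ring.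
by rewrite -[N.+2]/(1 + N.+1)%N; apply/(dvdXnM dvdXn1X)/wroot_opp.
Qed.
End QuadraticRoots.

Lemma big_ord_double (V : nmodType) k (F : nat -> V) :
  \sum_(i < k.*2.+1) F i = \sum_(j < k.+1) F j.*2 + \sum_(j < k) F j.*2.+1.
Proof.
elim: k => [|k IHk]; first by rewrite big_ord0 !big_ord1 addr0.
rewrite doubleS (big_ord_recr k.*2.+2) (big_ord_recr k.*2.+1) /= IHk.
rewrite (big_ord_recr k.+1 (fun j => F j.*2)) (big_ord_recr k (fun j => F j.*2.+1)) /=.
by rewrite addrACA -addrA [F _ + F _]addrC.
Qed.

Section PiSeries.
Variable tau : C.

Definition pi_poly M f := (trunc M f \Po rootp tau M) * (trunc M f \Po rootm tau M).

Definition pi_ser f : fps := fun k => (pi_poly k.*2.+1 f)`_(k.*2).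

Lemma eqXn_pi_poly M N f : (N <= M)%N -> eqXn N (pi_poly M f) (pi_poly N f).
Proof.
move=> NM; have NN2 : (N <= N.+2)%N by rewrite leqW.
apply: eqXnM.
  exact: eqXn_comp (rootp0 _ _) (eqXn_trunc f NM) (eqXnW NN2 (eqXn_rootp tau NM)).
exact: eqXn_comp (rootm0 _ _) (eqXn_trunc f NM) (eqXnW NN2 (eqXn_rootm tau NM)).
Qed.

Lemma pi_serE f k M : (k.*2 < M)%N -> pi_ser f k = (pi_poly M f)`_(k.*2).
Proof. by move=> kM; rewrite /pi_ser (eqXn_coef (eqXn_pi_poly f kM)). Qed.

Lemma pi_poly_opp M f : eqXn M.+2 (pi_poly M f \Po - 'X) (pi_poly M f).
Proof.
rewrite /pi_poly comp_polyM -!comp_polyA mulrC.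
by apply: eqXnM; apply: eqXn_compr; [apply: rootm_opp | apply: rootp_opp].
Qed.

Lemma coef_pi_poly_odd M f k : odd k -> (k < M.+2)%N -> (pi_poly M f)`_k = 0.
Proof.
move=> oddk kM; have := eqXn_coef (pi_poly_opp M f) kM.
rewrite -scaleN1r coef_comp_polyZX -signr_odd oddk expr1 mulN1r => /eqP.
by rewrite -subr_eq0 -opprD oppr_eq0 -mulr2n mulrn_eq0 => /eqP.
Qed.

Lemma pi_poly_smul M f g : eqXn M (pi_poly M (smul f g)) (pi_poly M f * pi_poly M g).
Proof.
have comp_smul r : dvdXn 1 r ->
    eqXn M (trunc M (smul f g) \Po r) ((trunc M f \Po r) * (trunc M g \Po r)).
  by move=> r0; rewrite -comp_polyM; apply/eqXn_compl/trunc_smul.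
have := eqXnM (comp_smul _ (rootp0 tau M)) (comp_smul _ (rootm0 tau M)).
by rewrite /pi_poly mulrACA.
Qed.

Lemma pi_ser_smul f g : pi_ser (smul f g) = smul (pi_ser f) (pi_ser g).
Proof.
apply/boolp.funext => k; set n := k.*2.+1.
rewrite /pi_ser (eqXn_coef (pi_poly_smul n f g) (ltnSn _)) coefM.
rewrite (big_ord_double _ (fun i => (pi_poly n f)`_i * (pi_poly n g)`_(k.*2 - i))).
rewrite [X in _ + X]big1 ?addr0 => [|j _]; last first.
  by rewrite coef_pi_poly_odd ?mul0r ?odd_double // /n; have := ltn_ord j; lia.
apply: eq_bigr => j _; have jk := ltn_ord j.
by rewrite -doubleB -!pi_serE // /n; lia.
Qed.

Lemma pi_ser_sone : pi_ser sone = sone.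
Proof.
apply/boolp.funext => k; rewrite /pi_ser /pi_poly trunc_sone // !comp_poly1 mulr1 coef1.
by rewrite double_eq0.
Qed.

Lemma pi_ser_sprod s : pi_ser (sprod s) = sprod (map pi_ser s).
Proof.
by elim: s => [|f s IHs]; [exact: pi_ser_sone | rewrite [sprod _]/= pi_ser_smul IHs].
Qed.

Lemma sym_rootp_rootm N c d :
  eqXn N (c *: (rootp tau N + rootm tau N) + d *: (rootp tau N * rootm tau N))
         ((c * tau - d) *: 'X^2).
Proof.
rewrite rootp_add_rootm scalerA scalerBl -scalerN; apply: eqXnD (eqXn_refl _ _) _.
exact/eqXnZ/(eqXnW _ (rootp_mul_rootm tau N))/leqW/leqW.
Qed.

Lemma pi_ser_linser c : pi_ser (linser c) = linser (c * (tau - c)).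
Proof.
apply/boolp.funext => k; rewrite /pi_ser; set n := k.*2.+1.
have lin_trunc : eqXn n (trunc n (linser c)) (1 + c *: 'X).
  apply/eqXnP => i iN; rewrite coef_trunc iN coefD coef1 coefZ coefX /linser.
  by case: i {iN} => [|[|i]] /=; rewrite ?mulr0 ?mulr1 ?addr0 ?add0r.
have -> : (pi_poly n (linser c))`_(k.*2) = (1 + (c * (tau - c)) *: 'X^2)`_(k.*2).
  apply: eqXn_coef (ltnSn _).
  apply: (@eqXn_trans _ _ _
    (((1 + c *: 'X) \Po rootp tau n) * ((1 + c *: 'X) \Po rootm tau n))).
    exact: eqXnM (eqXn_compl (rootp0 _ _) lin_trunc) (eqXn_compl (rootm0 _ _) lin_trunc).
  rewrite !comp_polyD !comp_poly1 !comp_polyZ !comp_polyX.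
  have -> : (1 + c *: rootp tau n) * (1 + c *: rootm tau n) =
      1 + (c *: (rootp tau n + rootm tau n) + (c ^+ 2) *: (rootp tau n * rootm tau n)).
    by rewrite -!mul_polyC polyC_exp; ring.
  have -> : c * (tau - c) = c * tau - c ^+ 2 by ring.
  exact: eqXnD (eqXn_refl _ _) (sym_rootp_rootm n _ _).
rewrite coefD coef1 coefZ coefXn.
by case: k {n lin_trunc} => [|[|k]] /=; rewrite ?mulr0 ?mulr1 ?addr0 ?add0r.
Qed.

Lemma pi_ser_expser c : pi_ser (expser c) = expser (c * tau).
Proof.
apply/boolp.funext => k; rewrite /pi_ser /pi_poly.
rewrite (eqXn_coef (expser_comp_mul c k.*2 (rootp0 _ _) (rootm0 _ _)) (ltnSn _)).
rewrite rootp_add_rootm coef_comp_polyZX2 coef_trunc ifT; last by rewrite ltnS -addnn leq_addr.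
by rewrite /expser exprMn mulrA [tau ^+ k * _]mulrC.
Qed.

Lemma pi_ser_binser th x : pi_ser (binser th x) = binser th (x * (x + tau)).
Proof.
apply/boolp.funext => k; set n := k.*2.+1.
rewrite /pi_ser /pi_poly -/n trunc_binser -!comp_polyA !comp_polyZ !comp_polyX.
set a := rootp tau n; set b := rootm tau n; set B := trunc _ (binser th 1).
have xa0 : dvdXn 1 (x *: a) := dvdXnZ x (rootp0 _ _).
have xb0 : dvdXn 1 (x *: b) := dvdXnZ x (rootm0 _ _).
rewrite (eqXn_coef (binser_comp_mul th k.*2 xa0 xb0) (ltnSn _)).
have sym : eqXn n (x *: a + x *: b - x *: a * (x *: b)) ((x * (x + tau)) *: 'X^2).
  have -> : x *: a + x *: b - x *: a * (x *: b) = x *: (a + b) + (- x ^+ 2) *: (a * b).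
    by rewrite -!mul_polyC polyCN polyC_exp; ring.
  have -> : x * (x + tau) = x * tau - - x ^+ 2 by ring.
  exact: sym_rootp_rootm.
rewrite (eqXn_coef (eqXn_compr B sym) (ltnSn _)) coef_comp_polyZX2 coef_trunc ifT.
  by rewrite /binser expr1n mulr1 mulrC.
by rewrite ltnS -addnn leq_addr.
Qed.

Definition pi_coef k i j : C := (rootp tau k.*2.+1 ^+ i * rootm tau k.*2.+1 ^+ j)`_(k.*2).

Lemma pi_ser_expand f k :
  pi_ser f k = \sum_(i < k.*2.+1) \sum_(j < k.*2.+1) f i * f j * pi_coef k i j.
Proof.
rewrite /pi_ser /pi_poly !trunc_comp mulr_suml coef_sum; apply: eq_bigr => i _.
rewrite mulr_sumr coef_sum; apply: eq_bigr => j _.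
by rewrite -scalerAl -scalerAr scalerA coefZ.
Qed.
End PiSeries.

Module LambdaClosure.
From mathcomp Require Import mpoly.
Local Open Scope ring_scope.

Lemma msize_leqP n (p : {mpoly C[n]}) d :
  (forall m, p@_m != 0 -> (mdeg m <= d)%N) <-> (msize p <= d.+1)%N.
Proof.
split=> [p_deg|p_size m pm].
  by rewrite msizeE; apply/bigmax_leqP_seq => m mp _; rewrite ltnS p_deg -?mcoeff_msupp.
by rewrite -ltnS (leq_trans _ p_size) ?msize_mdeg_lt ?mcoeff_msupp.
Qed.

Lemma msizeM_leq n (p q : {mpoly C[n]}) : (msize (p * q) <= (msize p + msize q).-1)%N.
Proof.
have [->|p0] := eqVneq p 0; first by rewrite mul0r msize0.
have [->|q0] := eqVneq q 0; first by rewrite mulr0 msize0.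
by rewrite msizeM.
Qed.

Lemma in_Lambda_ext F G : F =1 G -> in_Lambda F -> in_Lambda G.
Proof.
move=> FG [Fperm Frcons [d Fpoly]]; split=> [s s' ss'|s|]; rewrite -?FG.
- exact: Fperm.
- exact: Frcons.
by exists d => n; have [p [p_deg Fp]] := Fpoly n; exists p; split=> // t; rewrite -FG.
Qed.

Lemma in_Lambda_const c : in_Lambda (fun _ => c).
Proof.
split=> //; exists 0%N => n; exists c%:MP; split=> [m|t]; last by rewrite mevalC.
by rewrite mcoeffC; have [->|] := eqVneq m 0%MM; rewrite ?mdeg0 // mulr0 eqxx.
Qed.

Lemma in_Lambda_add F G : in_Lambda F -> in_Lambda G -> in_Lambda (fun s => F s + G s).
Proof.
move=> [Fperm Frcons [d1 Fpoly]] [Gperm Grcons [d2 Gpoly]]; split.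
- by move=> s s' ss'; rewrite (Fperm _ _ ss') (Gperm _ _ ss').
- by move=> s; rewrite Frcons Grcons.
exists (maxn d1 d2) => n; have [p [/msize_leqP p_deg Fp]] := Fpoly n.
have [q [/msize_leqP q_deg Gq]] := Gpoly n.
exists (p + q); split=> [|t]; last by rewrite mevalD Fp Gq.
apply/msize_leqP; apply: leq_trans (msizeD_le _ _) _.
by rewrite geq_max; apply/andP; split; lia.
Qed.

Lemma in_Lambda_mul F G : in_Lambda F -> in_Lambda G -> in_Lambda (fun s => F s * G s).
Proof.
move=> [Fperm Frcons [d1 Fpoly]] [Gperm Grcons [d2 Gpoly]]; split.
- by move=> s s' ss'; rewrite (Fperm _ _ ss') (Gperm _ _ ss').
- by move=> s; rewrite Frcons Grcons.
exists (d1 + d2)%N => n; have [p [/msize_leqP p_deg Fp]] := Fpoly n.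
have [q [/msize_leqP q_deg Gq]] := Gpoly n.
exists (p * q); split=> [|t]; last by rewrite mevalM Fp Gq.
by apply/msize_leqP; apply: leq_trans (msizeM_leq _ _) _; lia.
Qed.

Lemma in_Lambda_sum (I : Type) (r : seq I) (F : I -> symfun) :
  (forall i, in_Lambda (F i)) -> in_Lambda (fun s => \sum_(i <- r) F i s).
Proof.
move=> FL; elim: r => [|i r IHr].
  by apply: in_Lambda_ext (in_Lambda_const 0) => s; rewrite big_nil.
by apply: in_Lambda_ext (in_Lambda_add (FL i) IHr) => s; rewrite big_cons.
Qed.

(* The coefficient of t^j has total degree at most j. *)
Definition graded n (P : {poly {mpoly C[n]}}) := forall j, (msize P`_j <= j.+1)%N.

Lemma graded1 n : graded (1 : {poly {mpoly C[n]}}).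
Proof. by move=> j; rewrite coef1; case: eqP => _; rewrite ?msize1 ?msize0. Qed.

Lemma gradedM n (P Q : {poly {mpoly C[n]}}) : graded P -> graded Q -> graded (P * Q).
Proof.
move=> Pj Qj j; rewrite coefM; apply: leq_trans (msize_sum _ _ _) _.
apply/bigmax_leqP => i _; apply: leq_trans (msizeM_leq _ _) _.
by have := leq_add (Pj i) (Qj (j - i)%N); have := ltn_ord i; lia.
Qed.

Definition binser_mpoly n th m (i : 'I_n) : {poly {mpoly C[n]}} :=
  \poly_(j < m.+1) (binser th 1 j *: 'X_i ^+ j).

Lemma graded_binser_mpoly n th m i : graded (@binser_mpoly n th m i).
Proof.
move=> j; rewrite coef_poly; case: ifP => _; last by rewrite msize0.
by apply: leq_trans (msizeZ_le _ _) _; rewrite mpolyXn msizeX mdegMn mdeg1 mul1n.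
Qed.

Lemma map_binser_mpoly n th m (v : 'I_n -> C) i :
  map_poly (meval v) (binser_mpoly th m i) = trunc m.+1 (binser th (v i)).
Proof.
apply/polyP => j; rewrite coef_map coef_trunc !coef_poly.
case: ifP => _; last exact: raddf0.
rewrite /= mevalZ rmorphXn /= mevalXU.
by rewrite /binser expr1n mulr1 mulrC.
Qed.

Lemma in_Lambda_binser_prod th m : in_Lambda (fun s => sprod [seq binser th x | x <- s] m).
Proof.
have gE s : sprod [seq binser th x | x <- s] m =
    (\prod_(f <- [seq binser th x | x <- s]) trunc m.+1 f)`_m by exact: coef_sprod.
split=> [s s' ss'|s|].
- by rewrite !gE !big_map (perm_big _ ss').
- rewrite !gE map_rcons big_rcons /= trunc_binser scale0r comp_poly0r.
  by rewrite coef_trunc binser0 mulr1.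
exists m => n; exists ((\prod_(i < n) binser_mpoly th m i)`_m); split.
  apply/msize_leqP; suff : graded (\prod_(i < n) binser_mpoly th m i) by apply.
  apply: (big_ind (@graded n)); [exact: graded1 | exact: gradedM | move=> i _].
  exact: graded_binser_mpoly.
move=> t; rewrite gE -coef_map rmorph_prod big_map big_tuple.
by congr (nth 0 (polyseq _) m); apply: eq_bigr => i _; rewrite /= map_binser_mpoly.
Qed.
End LambdaClosure.

Import LambdaClosure.
From mathcomp Require Import all_classical all_reals all_analysis.
Import numFieldNormedType.Exports.
Local Open Scope classical_set_scope.
Local Open Scope complex_scope.
Local Open Scope ring_scope.

Lemma pi_ser_cvg tau (u : nat -> fps) P : (forall i, (fun N => u N i) @ \oo --> P i) ->
  forall k, (fun N => pi_ser tau (u N) k) @ \oo --> pi_ser tau P k.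
Proof.
move=> uP k; rewrite pi_ser_expand.
have -> : (fun N => pi_ser tau (u N) k) = fun N => \sum_(i < k.*2.+1) \sum_(j < k.*2.+1)
    u N i * u N j * pi_coef tau k i j by apply/funext => N; rewrite pi_ser_expand.
apply: cvg_big => [|i _]; first exact: add_continuous.
apply: cvg_big => [|j _]; first exact: add_continuous.
exact: cvgM (cvgM (uP i) (uP j)) (cvg_cst _).
Qed.

Lemma pi_ser_infprod tau (F G : nat -> fps) P : (forall i, pi_ser tau (F i) = G i) ->
  is_infprod F P -> is_infprod G (pi_ser tau P).
Proof.
move=> FG FP k; have -> : (fun N => sprod [seq G i | i <- iota 0 N] k) =
    fun N => pi_ser tau (sprod [seq F i | i <- iota 0 N]) k.
  apply/funext => N; rewrite pi_ser_sprod -map_comp; congr (sprod _ k).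
  by apply: eq_map => i /=; rewrite FG.
exact: pi_ser_cvg.
Qed.

Lemma pi_ser_binser_prod tau th s :
  pi_ser tau (sprod [seq binser th x | x <- s]) =
  sprod [seq binser th x | x <- [seq x * (x + tau) | x <- s]].
Proof.
by rewrite pi_ser_sprod -!map_comp; congr sprod; apply: eq_map => x /=; apply: pi_ser_binser.
Qed.

Lemma g_k0 theta : g_k theta 0 = fun _ => 1.
Proof.
apply/funext => s; rewrite /g_k; elim: s => [|x s IHs] //=.
by rewrite /smul big_ord1 binser0 mul1r.
Qed.

Section AlgebraHomomorphism.
Variables (eps : symfun -> C) (theta : R).
Hypothesis eps_hom : is_alg_hom eps.

Lemma eps_sum (I : Type) (r : seq I) (F : I -> symfun) : (forall i, in_Lambda (F i)) ->
  eps (fun s => \sum_(i <- r) F i s) = \sum_(i <- r) eps (F i).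
Proof.
have [eps_c eps_add _] := eps_hom; move=> FL; elim: r => [|i r IHr].
  by rewrite big_nil -[RHS]eps_c; congr eps; apply/funext => s; rewrite big_nil.
rewrite big_cons -IHr -eps_add //; last exact: in_Lambda_sum.
by congr eps; apply/funext => s; rewrite big_cons.
Qed.

Lemma genser_eps (F : nat -> symfun) : F 0%N = (fun _ => 1) ->
  genser (fun k => eps (F k)) = fun k => eps (F k).
Proof.
by have [eps_c _ _] := eps_hom; move=> F0; apply/funext => -[|k] //=; rewrite F0 eps_c.
Qed.

Lemma eps_pi_tau_g tau k :
  eps (pi_tau tau (g_k theta k)) = pi_ser tau (fun m => eps (g_k theta m)) k.
Proof.
have [eps_c _ eps_mul] := eps_hom.
have gL m : in_Lambda (g_k theta m) := in_Lambda_binser_prod _ m.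
have ggL i j : in_Lambda (fun s => g_k theta i s * g_k theta j s).
  exact: in_Lambda_mul (gL i) (gL j).
have gg_cL i j c : in_Lambda (fun s => g_k theta i s * g_k theta j s * c).
  exact: in_Lambda_mul (ggL i j) (in_Lambda_const c).
have -> : pi_tau tau (g_k theta k) = fun s => \sum_(i < k.*2.+1) \sum_(j < k.*2.+1)
    g_k theta i s * g_k theta j s * pi_coef tau k i j.
  by apply/funext => s; rewrite /pi_tau /g_k -pi_ser_binser_prod pi_ser_expand.
rewrite pi_ser_expand eps_sum => [|i]; last by apply: in_Lambda_sum => j; apply: gg_cL.
apply: eq_bigr => i _; rewrite eps_sum => [|j]; last exact: gg_cL.
apply: eq_bigr => j _.
by rewrite (eps_mul _ _ (ggL i j) (in_Lambda_const _)) eps_c eps_mul.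
Qed.
End AlgebraHomomorphism.

Theorem proposition3p2 (theta : R) (htheta : 0 < theta)
    (alpha beta : nat -> R) (gamma : R) (hVK : is_VK alpha beta gamma)
    (eps : symfun -> C) (heps : is_VK_hom theta alpha beta gamma eps)
    (tau : C) :
  exists P : fps,
    is_infprod
      (fun i => smul
         (linser (theta%:C * (beta i)%:C * (tau - theta%:C * (beta i)%:C)))
         (binser theta%:C ((alpha i)%:C * (tau + (alpha i)%:C)))) P /\
    genser (fun k => eps (pi_tau tau (g_k theta k)))
      = smul (expser (gamma%:C * theta%:C * tau)) P.
Proof.
have [hom [P [hP hE]]] := heps.
exists (pi_ser tau P); split.
  apply: pi_ser_infprod hP => i; rewrite pi_ser_smul pi_ser_linser pi_ser_binser.
  by congr (smul (linser _) (binser _ _)); ring.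
rewrite genser_eps //; last by rewrite /pi_tau g_k0.
have -> : (fun k => eps (pi_tau tau (g_k theta k))) = pi_ser tau (fun m => eps (g_k theta m)).
  by apply/funext => k; apply: eps_pi_tau_g.
by rewrite -genser_eps ?g_k0 // hE pi_ser_smul pi_ser_expser.
Qed.
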